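(* Let $(\Omega,\mathcal F)$ be a measurable space with $\Sigma\neq\emptyset$, and let $v:\mathcal F\to\mathbb R$ be non-decreasing and submodular with $v(\emptyset)=0$. Then $v$ is continuous if and only if both of the following hold: (i) $\lim_{n\to\infty}v(A_n)=v(\bigcup_n A_n)$ for every sequence $A_1\subset A_2\subset\cdots$ in $\mathcal F$; (ii) $\lim_{n\to\infty}v(A_n)=v(\bigcap_n A_n)$ for every sequence $A_1\supset A_2\supset\cdots$ in $\mathcal F$.
   Context: $\Sigma$ denotes the set of all classes $\mathcal I\subset\mathcal F$ that are chains (totally ordered by inclusion), contain $\emptyset$ and $\Omega$, and generate $\mathcal F$ as a $\sigma$-algebra. $v$ is non-decreasing if $v(A)\le v(B)$ for $A\subset B$, submodular if $v(A)+v(B)\ge v(A\cup B)+v(A\cap B)$ for all $A,B\in\mathcal F$. For $\mathcal I\in\Sigma$ let $\mathcal J$ be the algebra generated by $\mathcal I$, whose elements are the sets $\bigcup_{i=1}^n (C_i\cap D_i^c)$ with $C_1\supset D_1\supset\cdots\supset C_n\supset D_n$ in $\mathcal I$; define $\mu_{v,\mathcal I}$ on $\mathcal J$ by $\mu_{v,\mathcal I}(\bigcup_{i=1}^n (C_i\cap D_i^c))=\sum_{i=1}^n(v(C_i)-v(D_i))$. A non-decreasing $v$ is called continuous if for every $\mathcal I\in\Sigma$ the finitely additive $\mu_{v,\mathcal I}$ is $\sigma$-additive on $\mathcal J$. *)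

From HB Require Import structures.
From mathcomp Require Import all_boot all_order all_algebra.
From mathcomp Require Import all_classical all_reals all_analysis.
Set Implicit Arguments. Unset Strict Implicit. Unset Printing Implicit Defensive.
Import Order.TTheory GRing.Theory Num.Theory numFieldNormedType.Exports.
Local Open Scope classical_set_scope.
Local Open Scope ring_scope.

Section Defs.
Context {d : measure_display} {T : measurableType d} {R : realType}.

Definition in_Sigma (I : set (set T)) : Prop :=
  I `<=` measurable /\
  (forall A B, I A -> I B -> A `<=` B \/ B `<=` A) /\
  I set0 /\ I setT /\
  <<s I >> = measurable.

Definition nondecreasing_cap (v : set T -> R) : Prop :=
  forall A B, measurable A -> measurable B -> A `<=` B -> v A <= v B.

Definition submodular (v : set T -> R) : Prop :=
  forall A B, measurable A -> measurable B ->
    v (A `|` B) + v (A `&` B) <= v A + v B.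

(* [rep_mu v I A r] : A = \bigcup_(i<n) (C_i \ D_i) with
   C_0 ⊇ D_0 ⊇ C_1 ⊇ D_1 ⊇ ... ⊇ C_{n-1} ⊇ D_{n-1} in I,
   and r = \sum_(i<n) (v C_i - v D_i) = mu_{v,I}(A) *)
Definition rep_mu (v : set T -> R) (I : set (set T)) (A : set T) (r : R) : Prop :=
  exists (n : nat) (C D : nat -> set T),
    (forall i, (i < n)%N -> I (C i) /\ I (D i)) /\
    (forall i, (i < n)%N -> D i `<=` C i) /\
    (forall i, (i.+1 < n)%N -> C i.+1 `<=` D i) /\
    A = \big[setU/set0]_(i < n) (C i `&` ~` D i) /\
    r = \sum_(i < n) (v (C i) - v (D i)).

(* A is in the algebra J generated by I *)
Definition in_J (I : set (set T)) (A : set T) : Prop :=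
  exists n (C D : nat -> set T),
    (forall i, (i < n)%N -> I (C i) /\ I (D i)) /\
    (forall i, (i < n)%N -> D i `<=` C i) /\
    (forall i, (i.+1 < n)%N -> C i.+1 `<=` D i) /\
    A = \big[setU/set0]_(i < n) (C i `&` ~` D i).

(* mu_{v,I} is sigma-additive on J (stated for every representation,
   mu_{v,I} being well defined on J) *)
Definition mu_sigma_additive (v : set T -> R) (I : set (set T)) : Prop :=
  forall (A : nat -> set T) (r : nat -> R) (s : R),
    (forall k, rep_mu v I (A k) (r k)) ->
    trivIset setT A ->
    rep_mu v I (\bigcup_k A k) s ->
    (fun N => \sum_(k < N) r k) @ \oo --> s.

Definition continuous_cap (v : set T -> R) : Prop :=
  forall I, in_Sigma I -> mu_sigma_additive v I.

End Defs.

From HB Require Import structures.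
From mathcomp Require Import all_boot all_order all_algebra.
From mathcomp Require Import all_classical all_reals all_analysis.
From mathcomp Require Import lra.
Import Order.TTheory GRing.Theory Num.Theory numFieldNormedType.Exports.
Local Open Scope classical_set_scope.
Local Open Scope ring_scope.

(* A finite signed combination s = sum_p a_p 1_(E_p) of sets of
   I that equals the indicator 1_Y has its "capacity" sum_p a_p v(E_p) between
   v(E) - v(E \ Y), for any measurable E containing the E_p, and v(Y): by
   induction on s, peeling off its largest set and using submodularity.  If U
   is the disjoint union of pieces A_k of the algebra generated by I, the
   remainder mu(U) - sum_(k<N) mu(A_k) is the capacity of such a combination for
   U \ (A_0 u ... u A_(N-1)), hence lies between 0 and the value of v on a
   decreasing sequence of sets with empty intersection: continuity from above
   gives sigma-additivity.  Conversely, a monotone sequence of measurable sets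
   and its limit lie in a single chain of Sigma, obtained by interleaving the
   sequence with a given chain, and sigma-additivity of mu_(v,I) on the
   telescoping differences yields continuity of v along the sequence. *)

Section indicator.
Context {T : Type} {R : pzRingType}.
Implicit Types A B : set T.

Lemma indic_setD_sub A B x : B `<=` A -> \1_(A `\` B) x = \1_A x - \1_B x :> R.
Proof.
move=> BA; rewrite !indicE in_setD.
have [Bx|nBx] := boolP (x \in B); last by rewrite andbT subr0.
by rewrite (mem_set (BA _ (set_mem Bx))) andbF subrr.
Qed.

Lemma indicU_disjoint A B x :
  A `&` B = set0 -> \1_(A `|` B) x = \1_A x + \1_B x :> R.
Proof.
move=> AB0; rewrite !indicE in_setU.
have [Ax|nAx] := boolP (x \in A); last by rewrite add0r.
have nBx : x \notin B.
  apply/negP => /set_mem Bx; have : (A `&` B) x by split=> //; exact: set_mem.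
  by rewrite AB0.
by rewrite (negbTE nBx) addr0.
Qed.

Lemma indic_bigsetU_trivIset n (F : nat -> set T) x :
  trivIset [set i | (i < n)%N] F ->
  \1_(\big[setU/set0]_(i < n) F i) x = \sum_(i < n) \1_(F i) x :> R.
Proof.
elim: n => [|n IH] Ftriv; first by rewrite !big_ord0 indic0.
rewrite !big_ord_recr /= indicU_disjoint ?IH //.
  by apply: sub_trivIset Ftriv => i /= /ltnW.
apply/seteqP; split => // y [].
rewrite -bigcup_mkord => -[i /= ilt Fiy] Fny.
have /= ein := Ftriv i n (ltnW ilt) (ltnSn n) (ex_intro _ y (conj Fiy Fny)).
by rewrite ein ltnn in ilt.
Qed.

End indicator.

Section set_sequences.
Context {T : Type}.
Implicit Types A : nat -> set T.

Lemma chain_seq_max {I : set (set T)} {U : eqType} (f : U -> set T) {s : seq U} :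
    (forall B C, I B -> I C -> B `<=` C \/ C `<=` B) ->
    s != [::] -> (forall u, u \in s -> I (f u)) ->
  exists2 u, u \in s & forall w, w \in s -> f w `<=` f u.
Proof.
move=> Ichain; elim: s => // u s IH _ sI.
have s_us : {subset s <= u :: s} by move=> w ws; rewrite in_cons ws orbT.
have Iu : I (f u) by apply: sI; rewrite mem_head.
have [->|/IH[|w ws wmax]] := eqVneq s [::].
- by exists u => [|w]; rewrite ?mem_seq1 ?mem_head // => /eqP->.
- by move=> w /s_us; exact: sI.
have [uw|wu] := Ichain _ _ Iu (sI w (s_us _ ws)).
- exists w; first exact: s_us.
  by move=> z; rewrite in_cons => /orP[/eqP->|/wmax].
- exists u; first exact: mem_head.
  by move=> z; rewrite in_cons => /orP[/eqP->//|/wmax/subset_trans]; apply.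
Qed.

Lemma subset_nondecreasing {A : nat -> set T} :
  (forall n, A n `<=` A n.+1) -> {homo A : m n / (m <= n)%N >-> m `<=` n}.
Proof.
move=> incA m n /subnK <-; elim: (n - m)%N => // k IH.
exact: subset_trans IH (incA _).
Qed.

Lemma trivIset_setD_nondecreasing A :
  (forall n, A n `<=` A n.+1) -> trivIset setT (fun k => A k.+1 `\` A k).
Proof.
move=> incA i j _ _ [x [[Ai1x nAix] [Aj1x nAjx]]].
have [ij|ji|//] := ltngtP i j.
- by case: nAjx; exact: subset_nondecreasing incA _ _ ij _ Ai1x.
- by case: nAix; exact: subset_nondecreasing incA _ _ ji _ Aj1x.
Qed.

Lemma bigcup_setD_nondecreasing A : (forall n, A n `<=` A n.+1) ->
  \bigcup_k (A k.+1 `\` A k) = \bigcup_k A k `\` A 0%N.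
Proof.
move=> incA; apply/seteqP; split=> x.
  move=> [k _ [Ak1x nAkx]]; split; first by exists k.+1.
  by move=> /(subset_nondecreasing incA _ _ (leq0n k)).
move=> [[n _]]; elim: n => [//|n IH] Anx nA0x.
by have [/IH|] := pselect (A n x); [exact|exists n].
Qed.

Lemma trivIset_setD_nonincreasing A :
  (forall n, A n.+1 `<=` A n) -> trivIset setT (fun k => A k `\` A k.+1).
Proof.
move=> decA; have -> : (fun k => A k `\` A k.+1) = (fun k => ~` A k.+1 `\` ~` A k).
  by apply/funext => k; rewrite !setDE setCK setIC.
by apply: trivIset_setD_nondecreasing => n; exact: subsetC.
Qed.

Lemma bigcup_setD_nonincreasing A : (forall n, A n.+1 `<=` A n) ->
  \bigcup_k (A k `\` A k.+1) = A 0%N `\` \bigcap_k A k.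
Proof.
move=> decA; have -> : (fun k => A k `\` A k.+1) = (fun k => ~` A k.+1 `\` ~` A k).
  by apply/funext => k; rewrite !setDE setCK setIC.
rewrite bigcup_setD_nondecreasing => [|n]; last exact: subsetC.
by rewrite -setC_bigcap !setDE setCK setIC.
Qed.

Lemma trivIset_subset_setD_bigsetU A N : trivIset setT A ->
  A N `<=` \bigcup_k A k `\` \big[setU/set0]_(k < N) A k.
Proof.
move=> Atriv x ANx; split; first by exists N.
rewrite -bigcup_mkord => -[k /= kN Akx].
have kN' := Atriv k N Logic.I Logic.I (ex_intro _ x (conj Akx ANx)).
by rewrite kN' ltnn in kN.
Qed.

Lemma bigcap_setD_bigsetU A :
  \bigcap_N (\bigcup_k A k `\` \big[setU/set0]_(k < N) A k) = set0.
Proof.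
apply/seteqP; split=> // x Yx; have [[k _ Akx] _] := Yx 0%N Logic.I.
by have [_] := Yx k.+1 Logic.I; apply; rewrite big_ord_recr; right.
Qed.

End set_sequences.

Section combination.
Context {T : Type} {R : pzRingType}.
Implicit Types (s : seq (R * set T)) (v : set T -> R).

Definition comb_fun s (x : T) : R := \sum_(p <- s) p.1 * \1_(p.2) x.
Definition comb_cap v s : R := \sum_(p <- s) p.1 * v p.2.
Definition comb_opp s : seq (R * set T) := [seq (- p.1, p.2) | p <- s].

Lemma comb_fun_cons p s x : comb_fun (p :: s) x = p.1 * \1_(p.2) x + comb_fun s x.
Proof. by rewrite /comb_fun big_cons. Qed.

Lemma comb_cap_cons v p s : comb_cap v (p :: s) = p.1 * v p.2 + comb_cap v s.
Proof. by rewrite /comb_cap big_cons. Qed.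

Lemma comb_fun_cat s1 s2 x : comb_fun (s1 ++ s2) x = comb_fun s1 x + comb_fun s2 x.
Proof. by rewrite /comb_fun big_cat. Qed.

Lemma comb_cap_cat v s1 s2 : comb_cap v (s1 ++ s2) = comb_cap v s1 + comb_cap v s2.
Proof. by rewrite /comb_cap big_cat. Qed.

Lemma comb_fun_flatten ss x : comb_fun (flatten ss) x = \sum_(s <- ss) comb_fun s x.
Proof. by rewrite /comb_fun big_flatten. Qed.

Lemma comb_cap_flatten v ss : comb_cap v (flatten ss) = \sum_(s <- ss) comb_cap v s.
Proof. by rewrite /comb_cap big_flatten. Qed.

Lemma comb_fun_opp s x : comb_fun (comb_opp s) x = - comb_fun s x.
Proof. by rewrite /comb_fun big_map -sumrN; apply: eq_bigr => p _; rewrite mulNr. Qed.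

Lemma comb_cap_opp v s : comb_cap v (comb_opp s) = - comb_cap v s.
Proof. by rewrite /comb_cap big_map -sumrN; apply: eq_bigr => p _; rewrite mulNr. Qed.

Lemma comb_fun_perm {s1 s2} : perm_eq s1 s2 -> comb_fun s1 =1 comb_fun s2.
Proof. by move=> s12 x; exact: perm_big. Qed.

Lemma comb_cap_perm v {s1 s2} : perm_eq s1 s2 -> comb_cap v s1 = comb_cap v s2.
Proof. exact: perm_big. Qed.

Lemma comb_fun_out s E x :
  (forall p, p \in s -> p.2 `<=` E) -> ~ E x -> comb_fun s x = 0.
Proof.
move=> sE nEx; rewrite /comb_fun big1_seq // => p /= ps.
by rewrite indicE memNset ?mulr0 // => /(sE _ ps).
Qed.

End combination.

Section chain_combination.
Context {d} {T : measurableType d} {R : realType} (v : set T -> R).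
Implicit Types (s : seq (R * set T)) (E Y : set T).

Definition comb_cap_bounded s Y : Prop :=
  comb_cap v s <= v Y /\
  forall E, measurable E -> (forall p, p \in s -> p.2 `<=` E) ->
    v E - v (E `\` Y) <= comb_cap v s.

Lemma comb_cap_bounded_perm {s1 s2 Y} :
  perm_eq s1 s2 -> comb_cap_bounded s1 Y -> comb_cap_bounded s2 Y.
Proof.
move=> s12 [capY capE]; rewrite /comb_cap_bounded -(comb_cap_perm v s12).
by split=> // E mE s2E; apply: capE => // p; rewrite (perm_mem s12) => /s2E.
Qed.

Lemma comb_cap_bounded_cons0 p s Y :
  p.1 * v p.2 = 0 -> comb_cap_bounded s Y -> comb_cap_bounded (p :: s) Y.
Proof.
move=> p0 [capY capE]; rewrite /comb_cap_bounded comb_cap_cons p0 add0r.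
by split=> // E mE psE; apply: capE => // q qs; apply: psE; rewrite in_cons qs orbT.
Qed.

Lemma comb_cap_bounded_merge a b A s Y :
  comb_cap_bounded ((a + b, A) :: s) Y -> comb_cap_bounded ((a, A) :: (b, A) :: s) Y.
Proof.
rewrite /comb_cap_bounded.
have -> : comb_cap v ((a + b, A) :: s) = comb_cap v ((a, A) :: (b, A) :: s).
  by rewrite !comb_cap_cons /= mulrDl addrA.
move=> [capY capE]; split=> // E mE sE; apply: capE => // q.
rewrite in_cons => /orP[/eqP->|qs]; first exact: (sE (a, A) (mem_head _ _)).
by apply: sE; rewrite !in_cons qs !orbT.
Qed.

Hypothesis v_sub : submodular v.

(* With [E = E' `|` Y], submodularity at [(E', Y)] and at [(E, F `\` Y)]
   turns the lower (resp. upper) bound of the negated combination for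
   [E `\` Y] into the upper (resp. lower) bound for [Y]. *)
Lemma comb_cap_bounded_flip E E' Y s :
    measurable E' -> measurable Y -> E' `|` Y = E ->
    (forall p, p \in s -> p.2 `<=` E') ->
    comb_cap_bounded (comb_opp s) (E `\` Y) -> comb_cap_bounded ((1, E) :: s) Y.
Proof.
move=> mE' mY E'YE sE' []; rewrite comb_cap_opp /comb_cap_bounded comb_cap_cons mul1r.
move=> capEY capE; have mE : measurable E by rewrite -E'YE; exact: measurableU.
split.
  have E'EY : E' `\` (E `\` Y) = E' `&` Y.
    by rewrite -E'YE; apply/seteqP; split=> x /=; case: (pselect (Y x)); tauto.
  have oppE' : forall p, p \in [seq (- q.1, q.2) | q <- s] -> p.2 `<=` E'.
    by move=> p /mapP[q qs ->]; exact: sE' _ qs.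
  have := capE E' mE' oppE'.
  by have := v_sub _ _ mE' mY; rewrite E'YE E'EY; lra.
move=> F mF sF; have EF : E `<=` F := sF _ (mem_head _ _).
have mFY : measurable (F `\` Y) by exact: measurableD.
have EFY : E `|` (F `\` Y) = F.
  apply/seteqP; split=> x; first by case=> [/EF|[]].
  by rewrite -E'YE /=; case: (pselect (Y x)); tauto.
have EFY' : E `&` (F `\` Y) = E `\` Y.
  by apply/seteqP; split=> x /= []; [tauto|move=> /[dup]/EF; tauto].
by have := v_sub _ _ mE mFY; rewrite EFY EFY'; lra.
Qed.

Hypothesis v0 : v set0 = 0.
Variable I : set (set T).
Hypothesis I_meas : forall A, I A -> measurable A.
Hypothesis I_chain : forall A B, I A -> I B -> A `<=` B \/ B `<=` A.

Definition chain_comb s := forall p, p \in s -> I p.2.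

Definition comb_cap_bounded_upto n := forall s Y, (size s <= n)%N ->
  chain_comb s -> measurable Y -> comb_fun s =1 \1_Y -> comb_cap_bounded s Y.

Lemma comb_cap_bounded_nil Y :
  comb_fun (R := R) [::] =1 \1_Y -> comb_cap_bounded [::] Y.
Proof.
move=> Y0; have -> : Y = set0.
  apply/seteqP; split=> // x Yx; move: (Y0 x).
  by rewrite /comb_fun big_nil indicE mem_set // => /eqP; rewrite eq_sym oner_eq0.
rewrite /comb_cap_bounded /comb_cap big_nil v0.
by split=> // E _ _; rewrite setD0 subrr.
Qed.

Lemma chain_strict_sub {E s} : E !=set0 ->
    (forall p, p \in s -> I p.2 /\ p.2 `<=` E) -> (forall p, p \in s -> p.2 <> E) ->
  exists E', [/\ measurable E', E' `<=` E, forall p, p \in s -> p.2 `<=` E' &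
                 exists2 x, E x & ~ E' x].
Proof.
move=> [x Ex] sIE sE.
have [->|/(chain_seq_max snd I_chain)[|m ms mmax]] := eqVneq s [::].
- by exists set0; split=> //; exists x.
- by move=> p /sIE[].
have [Im mE] := sIE _ ms; exists m.2; split=> //; first exact: I_meas.
apply: contrapT => nEm; apply: (sE _ ms); apply/seteqP; split=> // y Ey.
by apply: contrapT => nmy; apply: nEm; exists y.
Qed.

Lemma comb_cap_bounded_cons_dup {n a E r Y} : comb_cap_bounded_upto n ->
    (size r <= n)%N -> I E -> chain_comb r -> measurable Y ->
    comb_fun ((a, E) :: r) =1 \1_Y -> (exists2 q, q \in r & q.2 = E) ->
  comb_cap_bounded ((a, E) :: r) Y.
Proof.
move=> IH rn IE rI mY rY [[b B] qr /= BE]; subst B.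
have r_perm := perm_to_rem qr; set r' := rem (b, E) r in r_perm.
apply: (comb_cap_bounded_perm (s1 := (a, E) :: (b, E) :: r')).
  by rewrite perm_cons perm_sym.
apply/comb_cap_bounded_merge/IH => //.
- by move: rn; rewrite (perm_size r_perm).
- move=> p; rewrite in_cons => /orP[/eqP-> //|pr']; apply: rI.
  by rewrite (perm_mem r_perm) in_cons pr' orbT.
- move=> x; rewrite -rY !comb_fun_cons (comb_fun_perm r_perm) comb_fun_cons /=.
  by rewrite mulrDl addrA.
Qed.

Lemma comb_cap_bounded_cons_strict {n a E E' r Y x0} : comb_cap_bounded_upto n ->
    (size r <= n)%N -> I E -> chain_comb r -> measurable Y ->
    comb_fun ((a, E) :: r) =1 \1_Y -> Y `<=` E ->
    measurable E' -> E' `<=` E -> (forall p, p \in r -> p.2 `<=` E') ->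
    E x0 -> ~ E' x0 ->
  comb_cap_bounded ((a, E) :: r) Y.
Proof.
move=> IH rn IE rI mY rY YE mE' E'E rE' Ex0 nE'x0.
(* [x0] lies in the top set only, so [a] is a value of [\1_Y]. *)
have rE'0 x : ~ E' x -> comb_fun r x = 0 by exact: comb_fun_out rE'.
have a_Y : a = \1_Y x0.
  by rewrite -rY comb_fun_cons rE'0 // indicE mem_set // mulr1 addr0.
have [Yx0|nYx0] := pselect (Y x0); last first.
  apply: comb_cap_bounded_cons0; first by rewrite a_Y indicE memNset ?mul0r.
  by apply: IH => // x; rewrite -rY comb_fun_cons a_Y indicE memNset ?mul0r ?add0r.
have a1 : a = 1 by rewrite a_Y indicE mem_set.
rewrite {}a1 in rY *; apply: (comb_cap_bounded_flip _ E' _ _ mE' mY _ rE').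
  apply/seteqP; split=> [x [/E'E|/YE] //|x Ex].
  have [|nE'x] := pselect (E' x); [by left|right].
  move: (rY x); rewrite comb_fun_cons rE'0 // indicE mem_set // mul1r addr0 indicE.
  by have [//|nYx] := pselect (Y x); rewrite memNset // => /eqP; rewrite oner_eq0.
apply: IH; rewrite /comb_opp ?size_map //.
- by move=> p /mapP[q qr ->]; exact: rI _ qr.
- exact: measurableD (I_meas _ IE) mY.
- move=> x; rewrite comb_fun_opp indic_setD_sub //.
  by move: (rY x); rewrite comb_fun_cons mul1r => <-; rewrite opprD addNKr.
Qed.

Lemma comb_cap_bounded_cons_max {n a E r Y} : comb_cap_bounded_upto n ->
    (size r <= n)%N -> I E -> (forall p, p \in r -> I p.2 /\ p.2 `<=` E) ->
    measurable Y -> comb_fun ((a, E) :: r) =1 \1_Y ->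
  comb_cap_bounded ((a, E) :: r) Y.
Proof.
move=> IH rn IE rIE mY rY; have rI : chain_comb r by move=> p /rIE[].
have [dup|nodup] := pselect (exists2 q, q \in r & q.2 = E).
  exact: comb_cap_bounded_cons_dup IH rn IE rI mY rY dup.
have [E0|/set0P En0] := eqVneq E set0.
  apply: comb_cap_bounded_cons0; first by rewrite E0 v0 mulr0.
  by apply: IH => // x; rewrite -rY comb_fun_cons E0 indic0 mulr0 add0r.
have [E' [mE' E'E rE' [x0 Ex0 nE'x0]]] :=
  chain_strict_sub En0 rIE (fun p pr pE => nodup (ex_intro2 _ _ p pr pE)).
have YE : Y `<=` E.
  move=> y Yy; apply: contrapT => nEy; move: (rY y).
  rewrite (comb_fun_out _ E) ?indicE ?mem_set // => [/eqP|p].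
    by rewrite eq_sym oner_eq0.
  by rewrite in_cons => /orP[/eqP-> //|/rIE[]].
exact: comb_cap_bounded_cons_strict IH rn IE rI mY rY YE mE' E'E rE' Ex0 nE'x0.
Qed.

Lemma comb_cap_bounded_chain {s Y} : chain_comb s -> measurable Y ->
  comb_fun s =1 \1_Y -> comb_cap_bounded s Y.
Proof.
suff IH n : comb_cap_bounded_upto n by exact: IH (leqnn _).
elim: n {s Y} => [|n IH] s Y.
  by rewrite leqn0 => /nilP-> _ _; exact: comb_cap_bounded_nil.
move=> sn sI mY; have [->|s_nil] := eqVneq s [::]; first exact: comb_cap_bounded_nil.
move=> sY.
have [[a E] ps Emax] := chain_seq_max snd I_chain s_nil sI.
have s_perm := perm_to_rem ps; set r := rem (a, E) s in s_perm.
apply: (comb_cap_bounded_perm (s1 := (a, E) :: r)); first by rewrite perm_sym.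
apply: comb_cap_bounded_cons_max IH _ (sI _ ps) _ mY _.
- by move: sn; rewrite (perm_size s_perm).
- move=> p pr; have {}ps : p \in s by rewrite (perm_mem s_perm) in_cons pr orbT.
  by split; [exact: sI | exact: Emax].
- by move=> x; rewrite -(comb_fun_perm s_perm).
Qed.

Hypothesis v_mono : nondecreasing_cap v.

Lemma comb_cap_chain_ge0_le {s Y} : chain_comb s -> measurable Y ->
  comb_fun s =1 \1_Y -> 0 <= comb_cap v s <= v Y.
Proof.
move=> sI mY sY; have [capY capE] := comb_cap_bounded_chain sI mY sY.
have := capE _ measurableT (fun _ _ => @subsetT _ _).
have := v_mono _ _ (measurableD measurableT mY) measurableT (@subsetT _ (setT `\` Y)).
by rewrite capY andbT; lra.
Qed.

End chain_combination.

Section representation.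
Context {d} {T : measurableType d} {R : realType} {v : set T -> R} {I : set (set T)}.

Definition rep_comb n (C D : nat -> set T) : seq (R * set T) :=
  flatten [seq [:: (1, C i); (-1, D i)] | i <- index_iota 0 n].

Lemma alternating_chain_sub {n} {C D : nat -> set T} :
    (forall i, (i < n)%N -> D i `<=` C i) ->
    (forall i, (i.+1 < n)%N -> C i.+1 `<=` D i) ->
  forall i j, (i < j < n)%N -> C j `<=` D i.
Proof.
move=> DC CD i; elim=> // j IH /andP[ij jn]; apply: subset_trans (CD _ jn) _.
move: ij; rewrite ltnS leq_eqVlt => /orP[/eqP-> //|ij].
by apply: subset_trans (DC _ (ltnW jn)) (IH _); rewrite ij ltnW.
Qed.

Lemma rep_mu_setD {C D} : I C -> I D -> D `<=` C -> rep_mu v I (C `\` D) (v C - v D).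
Proof. by move=> IC ID DC; exists 1%N, (fun=> C), (fun=> D); rewrite !big_ord1. Qed.

Lemma rep_mu_measurable {A r} :
  (forall B, I B -> measurable B) -> rep_mu v I A r -> measurable A.
Proof.
move=> I_meas [n [C [D [CDI [_ [_ [-> _]]]]]]].
apply: bigsetU_measurable => i _; have [IC ID] := CDI i (ltn_ord i).
exact: measurableI (I_meas _ IC) (measurableC (I_meas _ ID)).
Qed.

Lemma rep_mu_comb {A r} : rep_mu v I A r ->
  exists c, [/\ chain_comb I c, comb_fun c =1 \1_A & comb_cap v c = r].
Proof.
move=> [n [C [D [CDI [DC [CD [-> ->]]]]]]]; exists (rep_comb n C D); split.
- move=> p /flattenP[ps /mapP[i]]; rewrite mem_index_iota => /andP[_ ilt] ->.
  by rewrite !inE => /orP[]/eqP-> /=; have [] := CDI i ilt.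
- move=> x; rewrite comb_fun_flatten big_map big_mkord.
  rewrite (indic_bigsetU_trivIset _ (fun i => C i `&` ~` D i)).
    apply: eq_bigr => i _; rewrite -setDE indic_setD_sub; last exact: DC.
    by rewrite /comb_fun !big_cons big_nil /= mul1r mulN1r addr0.
  move=> i j /= ilt jlt [y [[Ciy nDiy] [Cjy nDjy]]].
  have [ij|ji|//] := ltngtP i j.
  + by case: nDiy; apply: (alternating_chain_sub DC CD i j _ y Cjy); rewrite ij.
  + by case: nDjy; apply: (alternating_chain_sub DC CD j i _ y Ciy); rewrite ji.
- rewrite comb_cap_flatten big_map big_mkord; apply: eq_bigr => i _.
  by rewrite /comb_cap !big_cons big_nil /= mul1r mulN1r addr0.
Qed.

End representation.

Lemma rep_mu_setD_bigsetU {d} {T : measurableType d} {R : realType}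
    {v : set T -> R} {I} {A : nat -> set T} {r s} N :
    (forall k, rep_mu v I (A k) (r k)) -> rep_mu v I (\bigcup_k A k) s ->
    trivIset setT A ->
  exists c, [/\ chain_comb I c,
    comb_fun c =1 \1_(\bigcup_k A k `\` \big[setU/set0]_(k < N) A k) &
    comb_cap v c = s - \sum_(k < N) r k].
Proof.
move=> Arep Urep Atriv; elim: N => [|N [c [cI cfun ccap]]].
  have [c [cI cfun ccap]] := rep_mu_comb Urep.
  by exists c; rewrite !big_ord0 setD0 subr0.
have [a [aI afun acap]] := rep_mu_comb (Arep N).
exists (c ++ comb_opp a); split.
- move=> p; rewrite mem_cat /comb_opp => /orP[/cI //|/mapP[q qa ->]].
  exact: aI _ qa.
- move=> x; rewrite comb_fun_cat comb_fun_opp cfun afun big_ord_recr /= -setDDl.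
  by rewrite [RHS]indic_setD_sub //; exact: trivIset_subset_setD_bigsetU.
- by rewrite comb_cap_cat comb_cap_opp ccap acap big_ord_recr /= opprD addrA.
Qed.

Lemma continuous_cap_of_cvg_nonincreasing {d} {T : measurableType d}
    {R : realType} (v : set T -> R) :
    v set0 = 0 -> nondecreasing_cap v -> submodular v ->
    (forall A : nat -> set T, (forall n, measurable (A n)) ->
       (forall n, A n.+1 `<=` A n) ->
       (fun n => v (A n)) @ \oo --> v (\bigcap_n A n)) ->
  continuous_cap v.
Proof.
move=> v0 v_mono v_sub v_cvg I [I_meas [I_chain _]] A r s Arep Atriv Urep.
pose Y N := \bigcup_k A k `\` \big[setU/set0]_(k < N) A k.
have mY N : measurable (Y N).
  apply: measurableD; first exact: rep_mu_measurable I_meas Urep.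
  by apply: bigsetU_measurable => k _; exact: rep_mu_measurable I_meas (Arep k).
have Y_bounds N : 0 <= s - \sum_(k < N) r k <= v (Y N).
  have [c [cI cfun <-]] := rep_mu_setD_bigsetU N Arep Urep Atriv.
  exact: (comb_cap_chain_ge0_le v v_sub v0 I I_meas I_chain v_mono cI (mY N) cfun).
have vY0 : (fun N => v (Y N)) @ \oo --> 0.
  rewrite -v0 -(bigcap_setD_bigsetU A); apply: v_cvg => // N.
  by apply: setDS; exact: subset_bigsetU.
have sum_cvg : (fun N => s - \sum_(k < N) r k) @ \oo --> 0.
  by apply: (squeeze_cvgr _ (cvg_cst 0) vY0); exact: nearW.
apply/subr_cvg0/(cvgNP _ 0); rewrite oppr0.
suff -> : - (fun N => \sum_(k < N) r k - s) = (fun N => s - \sum_(k < N) r k) by [].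
by apply/funext => N /=; rewrite opprB.
Qed.

Section chain_construction.
Context {d} {T : measurableType d}.
Implicit Types (I J : set (set T)) (B : nat -> set T).

Lemma g_sigma_algebra_eq_measurable I J : <<s I >> = measurable ->
  J `<=` measurable -> I `<=` <<s J >> -> <<s J >> = measurable.
Proof.
move=> Igen Jm IJ; apply/seteqP; split.
  by apply: smallest_sub Jm; exact: sigma_algebra_measurable.
by rewrite -Igen; apply: smallest_sub IJ; exact: smallest_sigma_algebra.
Qed.

Lemma in_Sigma_setC {I} : in_Sigma I -> in_Sigma [set ~` E | E in I].
Proof.
move=> [I_meas [I_chain [I0 [IT Igen]]]]; split.
  by move=> _ [E IE <-]; exact/measurableC/I_meas.
split.
  move=> _ _ [E1 IE1 <-] [E2 IE2 <-].
  by have [E12|E21] := I_chain _ _ IE1 IE2; [right|left]; exact: subsetC.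
split; first by exists setT; rewrite ?setCT.
split; first by exists set0; rewrite ?setC0.
apply: g_sigma_algebra_eq_measurable Igen _ _.
  by move=> _ [E IE <-]; exact/measurableC/I_meas.
move=> E IE; rewrite -(setCK E); apply: sigma_algebraC; apply: sub_sigma_algebra.
by exists E.
Qed.

Definition interleave_chain I B : set (set T) :=
  [set E | (exists n, exists2 C, I C & E = B n `|` (C `&` B n.+1)) \/
           exists2 C, I C & E = \bigcup_n B n `|` C].

Lemma interleave_chain_step I B n C :
  I C -> interleave_chain I B (B n `|` (C `&` B n.+1)).
Proof. by move=> IC; left; exists n, C. Qed.

Lemma interleave_chain_bigcup I B C :
  I C -> interleave_chain I B (\bigcup_n B n `|` C).
Proof. by move=> IC; right; exists C. Qed.

Lemma interleave_chain_seq I B n : I set0 -> interleave_chain I B (B n).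
Proof.
by move=> I0; rewrite -[B n]setU0 -(set0I (B n.+1)); exact: interleave_chain_step.
Qed.

Lemma interleave_chain_lim I B : I set0 -> interleave_chain I B (\bigcup_n B n).
Proof. by move=> I0; rewrite -[X in _ X]setU0; exact: interleave_chain_bigcup. Qed.

Lemma interleave_chain_total I B :
    (forall A1 A2, I A1 -> I A2 -> A1 `<=` A2 \/ A2 `<=` A1) ->
    (forall n, B n `<=` B n.+1) ->
  forall E1 E2, interleave_chain I B E1 -> interleave_chain I B E2 ->
    E1 `<=` E2 \/ E2 `<=` E1.
Proof.
move=> I_chain incB.
have below n C : B n `|` (C `&` B n.+1) `<=` B n.+1 by move=> x [/incB|[]].
have above n C : B n `<=` B n `|` (C `&` B n.+1) by move=> x; left.
have belowU n C C' : B n `|` (C `&` B n.+1) `<=` \bigcup_n B n `|` C'.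
  by move=> x /below Bx; left; exists n.+1.
move=> E1 E2 [[n1 [C1 IC1 ->]]|[C1 IC1 ->]] [[n2 [C2 IC2 ->]]|[C2 IC2 ->]].
- have [n12|n21|<-] := ltngtP n1 n2.
  + left; apply: subset_trans (below _ _) (subset_trans _ (above _ _)).
    exact: subset_nondecreasing incB _ _ n12.
  + right; apply: subset_trans (below _ _) (subset_trans _ (above _ _)).
    exact: subset_nondecreasing incB _ _ n21.
  + by have [C12|C21] := I_chain _ _ IC1 IC2; [left|right];
      apply: setUS; exact: setSI.
- by left; exact: belowU.
- by right; exact: belowU.
- by have [C12|C21] := I_chain _ _ IC1 IC2; [left|right]; exact: setUS.
Qed.

Lemma in_Sigma_interleave I B : in_Sigma I -> (forall n, measurable (B n)) ->
  (forall n, B n `<=` B n.+1) -> B 0%N = set0 -> in_Sigma (interleave_chain I B).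
Proof.
move=> [I_meas [I_chain [I0 [IT Igen]]]] mB incB B0; set J := interleave_chain I B.
have J_meas : J `<=` measurable.
  move=> _ [[n [C IC ->]]|[C IC ->]].
    by apply: measurableU; [|apply: measurableI; [exact: I_meas|]].
  by apply: measurableU; [exact: bigcupT_measurable|exact: I_meas].
split=> //; split; first exact: interleave_chain_total.
split; first by rewrite -B0; exact: interleave_chain_seq.
split; first by rewrite -(setUT (\bigcup_n B n)); exact: interleave_chain_bigcup.
apply: g_sigma_algebra_eq_measurable Igen J_meas _ => C IC.
have -> : C = \bigcup_n ((B n `|` (C `&` B n.+1)) `\` B n) `|`
              ((\bigcup_n B n `|` C) `\` \bigcup_n B n).
  apply/seteqP; split=> x; last by case=> [[n _ [[//|[]]]]|[[//|]]].
  move=> Cx; have [Bx|nBx] := pselect ((\bigcup_n B n) x).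
    have : (\bigcup_k (B k.+1 `\` B k)) x.
      by rewrite bigcup_setD_nondecreasing // B0 setD0.
    by case=> k _ [Bk1x nBkx]; left; exists k => //; split=> //; right.
  by right; split=> //; right.
apply: (@measurableU _ (g_sigma_algebraType J)).
  apply: (@bigcupT_measurable _ (g_sigma_algebraType J)) => n.
  apply: (@measurableD _ (g_sigma_algebraType J)); apply: sub_sigma_algebra.
    exact: interleave_chain_step.
  exact: interleave_chain_seq.
apply: (@measurableD _ (g_sigma_algebraType J)); apply: sub_sigma_algebra.
  exact: interleave_chain_bigcup.
exact: interleave_chain_lim.
Qed.

Lemma in_Sigma_nondecreasing {I} {A : nat -> set T} : in_Sigma I ->
    (forall n, measurable (A n)) -> (forall n, A n `<=` A n.+1) ->
  exists J, [/\ in_Sigma J, forall n, J (A n) & J (\bigcup_n A n)].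
Proof.
move=> SI mA incA; have I0 : I set0 by case: SI => _ [_ []].
pose B n := if n is k.+1 then A k else set0.
have BA : \bigcup_n B n = \bigcup_n A n.
  apply/seteqP; split=> x; first by case=> -[|n] _ // Anx; exists n.
  by case=> n _ Anx; exists n.+1.
exists (interleave_chain I B); split.
- apply: in_Sigma_interleave => // -[|n] //=; exact: sub0set.
- by move=> n; exact: (interleave_chain_seq _ _ n.+1 I0).
- by rewrite -BA; exact: interleave_chain_lim.
Qed.

Lemma in_Sigma_nonincreasing {I} {A : nat -> set T} : in_Sigma I ->
    (forall n, measurable (A n)) -> (forall n, A n.+1 `<=` A n) ->
  exists J, [/\ in_Sigma J, forall n, J (A n) & J (\bigcap_n A n)].
Proof.
move=> SI mA decA.
have [J [SJ JA JU]] := in_Sigma_nondecreasing (in_Sigma_setC SI)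
  (fun n => measurableC (mA n)) (fun n => subsetC (decA n)).
exists [set ~` E | E in J]; split; first exact: in_Sigma_setC.
- by move=> n; exists (~` A n); rewrite ?setCK.
- by exists (\bigcup_n ~` A n); rewrite // -setC_bigcap setCK.
Qed.

End chain_construction.

Section continuity_of_sigma_additive.
Context {d} {T : measurableType d} {R : realType} {v : set T -> R} {I : set (set T)}.
Hypothesis v_sigma : mu_sigma_additive v I.
Implicit Types A : nat -> set T.

Lemma cvg_cap_nondecreasing {A} : (forall n, I (A n)) -> I (\bigcup_n A n) ->
  (forall n, A n `<=` A n.+1) -> (fun n => v (A n)) @ \oo --> v (\bigcup_n A n).
Proof.
move=> IA IU incA.
have rU : rep_mu v I (\bigcup_k (A k.+1 `\` A k)) (v (\bigcup_n A n) - v (A 0%N)).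
  by rewrite bigcup_setD_nondecreasing //; apply: rep_mu_setD => // x; exists 0%N.
have := v_sigma _ _ _ (fun k => rep_mu_setD (IA k.+1) (IA k) (incA k))
  (trivIset_setD_nondecreasing _ incA) rU.
have -> : (fun N => \sum_(k < N) (v (A k.+1) - v (A k))) =
          (fun N => v (A N) - v (A 0%N)).
  apply/funext => N.
  by rewrite -(telescope_sumr (fun k => v (A k)) (leq0n N)) big_mkord.
move=> h; have -> : (fun n => v (A n)) = (fun n => v (A n) - v (A 0%N) + v (A 0%N)).
  by apply/funext => n; rewrite subrK.
by rewrite -[X in _ --> X](subrK (v (A 0%N))); exact: cvgD h (cvg_cst _).
Qed.

Lemma cvg_cap_nonincreasing {A} : (forall n, I (A n)) -> I (\bigcap_n A n) ->
  (forall n, A n.+1 `<=` A n) -> (fun n => v (A n)) @ \oo --> v (\bigcap_n A n).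
Proof.
move=> IA IU decA.
have rU : rep_mu v I (\bigcup_k (A k `\` A k.+1)) (v (A 0%N) - v (\bigcap_n A n)).
  by rewrite bigcup_setD_nonincreasing //; apply: rep_mu_setD => // x; exact.
have := v_sigma _ _ _ (fun k => rep_mu_setD (IA k) (IA k.+1) (decA k))
  (trivIset_setD_nonincreasing _ decA) rU.
have -> : (fun N => \sum_(k < N) (v (A k) - v (A k.+1))) =
          (fun N => v (A 0%N) - v (A N)).
  apply/funext => N; under eq_bigr do rewrite -opprB.
  by rewrite sumrN -opprB -(telescope_sumr (fun k => v (A k)) (leq0n N)) big_mkord.
move=> h; have -> : (fun n => v (A n)) = (fun n => v (A 0%N) - (v (A 0%N) - v (A n))).
  by apply/funext => n; rewrite subKr.
by rewrite -[X in _ --> X](subKr (v (A 0%N))); exact: cvgB (cvg_cst _) h.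
Qed.

End continuity_of_sigma_additive.

Theorem proposition2 (d : measure_display) (T : measurableType d) (R : realType)
  (v : set T -> R) :
  (exists I : set (set T), in_Sigma I) ->
  nondecreasing_cap v -> submodular v -> v set0 = 0 ->
  (continuous_cap v <->
   ((forall A : nat -> set T, (forall n, measurable (A n)) ->
       (forall n, A n `<=` A n.+1) ->
       (fun n => v (A n)) @ \oo --> v (\bigcup_n A n)) /\
    (forall A : nat -> set T, (forall n, measurable (A n)) ->
       (forall n, A n.+1 `<=` A n) ->
       (fun n => v (A n)) @ \oo --> v (\bigcap_n A n)))).
Proof.
move=> [I0 SI0] v_mono v_sub v0; split; last first.
  by move=> [_ v_cvg]; apply: continuous_cap_of_cvg_nonincreasing.
move=> v_cont; split=> A mA monoA.
- have [I [SI IA IU]] := in_Sigma_nondecreasing SI0 mA monoA.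
  exact: (cvg_cap_nondecreasing (v_cont I SI) IA IU monoA).
- have [I [SI IA IU]] := in_Sigma_nonincreasing SI0 mA monoA.
  exact: (cvg_cap_nonincreasing (v_cont I SI) IA IU monoA).
Qed.
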